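(* Let $N$ be a positive integer, $L>0$, and $\zeta=(\zeta_0,\dots,\zeta_{N+2})\in\mathbb{R}^{N+3}$ with $\zeta_0>\zeta_1>\dots>\zeta_{N+1}>\zeta_{N+2}=0$. With $W^\zeta$ as defined in the context, if $\bar y=(\bar y_0,\dots,\bar y_N)\in\mathbb{R}^{N+1}$ satisfies $\bar y_k\geq0$ and $\bar y_n=0$ for some $0\leq k<n\leq N$, then \[ \frac{\partial}{\partial y_n}W^\zeta(\bar y)=0. \]
   Context: Let $e_0,\dots,e_N$ denote the standard unit vectors of $\mathbb{R}^{N+1}$ (zero-based indexing), and write $y=(y_0,\dots,y_N)$. Define for $i=0,\dots,N+1$: $x_i=-\sum_{j=0}^{i-1}\frac{\zeta_j-\zeta_{i+1}}{\sqrt{\zeta_j-\zeta_{j+1}}}e_j\in\mathbb{R}^{N+1}$; $g_i=L\sqrt{\zeta_i-\zeta_{i+1}}\,e_i$ for $i=0,\dots,N$ and $g_{N+1}=0$; $f_i=\frac L2(\zeta_i+\zeta_{i+1})$ for $i=0,\dots,N$ and $f_{N+1}=0$. For $y\in\mathbb{R}^{N+1}$, $\nu\in\mathbb{R}^{N+1}$, $\alpha=(\alpha_0,\dots,\alpha_{N+1})\in\mathbb{R}^{N+2}$ let $w^\zeta(y,\nu,\alpha)=\frac L2\|y+\nu-\sum_{i=0}^{N+1}\alpha_i(x_i-\frac1Lg_i)\|^2+\sum_{i=0}^{N+1}\alpha_i(f_i-\frac1{2L}\|g_i\|^2)$, and $W^\zeta(y)=\min\{w^\zeta(y,\nu,\alpha):\nu\in\mathbb{R}^{N+1}_+,\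 \alpha\in\Delta_{N+2}\}$, where $\mathbb{R}^{N+1}_+$ is the nonnegative orthant and $\Delta_{N+2}=\{\alpha\in\mathbb{R}^{N+2}:\alpha_i\geq0,\ \sum_i\alpha_i=1\}$. ($W^\zeta$ is differentiable.) *)

From Stdlib Require Import Reals Lra.
From Coquelicot Require Import Coquelicot.
Open Scope R_scope.

(* Vectors of R^{N+1} are represented as functions nat -> R; only the
   components 0..N are ever used.  zeta : nat -> R, components 0..N+2 used.
   Sums: sum_n a m = a 0 + ... + a m. *)

(* j-th component of x_i, for i = 0..N+1, j = 0..N *)
Definition xv (zeta : nat -> R) (i j : nat) : R :=
  if (j <? i)%nat
  then - ((zeta j - zeta (S i)) / sqrt (zeta j - zeta (S j)))
  else 0.

(* j-th component of g_i; g_{N+1} = 0 *)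
Definition gv (N : nat) (L : R) (zeta : nat -> R) (i j : nat) : R :=
  if ((i <=? N) && (j =? i))%bool
  then L * sqrt (zeta i - zeta (S i))
  else 0.

(* f_i ; f_{N+1} = 0 *)
Definition fv (N : nat) (L : R) (zeta : nat -> R) (i : nat) : R :=
  if (i <=? N)%nat then L / 2 * (zeta i + zeta (S i)) else 0.

Definition sqnorm (N : nat) (v : nat -> R) : R := sum_n (fun j => (v j) ^ 2) N.

Definition wz (N : nat) (L : R) (zeta : nat -> R)
  (y nu alpha : nat -> R) : R :=
  L / 2 * sqnorm N (fun j => y j + nu j
        - sum_n (fun i => alpha i * (xv zeta i j - / L * gv N L zeta i j)) (S N))
  + sum_n (fun i => alpha i * (fv N L zeta i
        - / (2 * L) * sqnorm N (gv N L zeta i))) (S N).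

Definition Wvals (N : nat) (L : R) (zeta : nat -> R) (y : nat -> R) (v : R) : Prop :=
  exists nu alpha : nat -> R,
    (forall j, (j <= N)%nat -> 0 <= nu j) /\
    (forall i, (i <= S N)%nat -> 0 <= alpha i) /\
    sum_n alpha (S N) = 1 /\
    v = wz N L zeta y nu alpha.

(* W^zeta(y) = min (= inf, the min being attained) of w^zeta over the feasible set *)
Definition Wz (N : nat) (L : R) (zeta : nat -> R) (y : nat -> R) : R :=
  real (Glb_Rbar (Wvals N L zeta y)).

Definition shift (y : nat -> R) (n : nat) (t : R) : nat -> R :=
  fun j => if (j =? n)%nat then y j + t else y j.

From Stdlib Require Import Reals Lra Lia.
From Coquelicot Require Import Coquelicot.
Open Scope R_scope.

(* In closed form, w is L/2 times the squared norm of a vector whose j-th coordinate is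
   y_j + nu_j + (1/s_j) sum_l alpha_l (zeta_j - min(zeta_j, zeta_(l+1))), s_j = sqrt(zeta_j - zeta_(j+1)),
   plus L times the mean mu = sum_l alpha_l zeta_(l+1).  By concavity of min, w is at least
   L * profile(mu), where profile(mu) is what remains after optimising nu; as ybar_k >= 0 for
   some k < n, lowering mu below zeta_n never decreases the profile, and every mu in
   [zeta_n, zeta_1] is attained by weights on two consecutive indices below n.  Hence W can be
   computed with weights vanishing from index n on.  For those the n-th coordinate is just
   y_n + nu_n, so moving y_n by t changes W by at most L t^2 / 2, and the derivative is 0. *)

Lemma sum_n_Rplus (a b : nat -> R) n :
  sum_n (fun i => a i + b i) n = sum_n a n + sum_n b n.
Proof. rewrite !sum_n_Reals; apply sum_plus. Qed.

Lemma sum_n_Rmult_r (a : nat -> R) c n : sum_n (fun i => a i * c) n = c * sum_n a n.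
Proof. rewrite !sum_n_Reals, scal_sum. reflexivity. Qed.

Lemma sum_n_le (a b : nat -> R) n :
  (forall i, (i <= n)%nat -> a i <= b i) -> sum_n a n <= sum_n b n.
Proof. rewrite !sum_n_Reals; apply sum_Rle. Qed.

Lemma sum_n_ext_R (a b : nat -> R) n :
  (forall i, (i <= n)%nat -> a i = b i) -> sum_n a n = sum_n b n.
Proof. apply sum_n_ext_loc. Qed.

Lemma sum_n_Rsucc (a : nat -> R) n : sum_n a (S n) = sum_n a n + a (S n).
Proof. exact (sum_Sn a n). Qed.

Lemma sum_n_zero (a : nat -> R) n : (forall i, (i <= n)%nat -> a i = 0) -> sum_n a n = 0.
Proof.
  intros Ha. rewrite (sum_n_ext_R _ (fun i => 0 * 0)) by (intros; rewrite Ha; auto; ring).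
  rewrite sum_n_Rmult_r. apply Rmult_0_l.
Qed.

Lemma sum_n_nonneg (a : nat -> R) n : (forall i, (i <= n)%nat -> 0 <= a i) -> 0 <= sum_n a n.
Proof. intros Ha. rewrite <- (sum_n_zero (fun _ => 0) n) by auto. now apply sum_n_le. Qed.

Lemma sum_n_delta c i n : (i <= n)%nat ->
  sum_n (fun l => if (l =? i)%nat then c else 0) n = c.
Proof.
  induction n as [|n IH]; intros Hi.
  - rewrite sum_O. now replace i with 0%nat by lia.
  - rewrite sum_n_Rsucc. destruct (Nat.eqb_spec (S n) i) as [<-|Hne].
    + rewrite sum_n_zero; [lra|]. intros l Hl. destruct (Nat.eqb_spec l (S n)); [lia|reflexivity].
    + rewrite IH by lia. lra.
Qed.

Lemma sum_n_update (a b : nat -> R) m n : (m <= n)%nat ->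
  (forall j, (j <= n)%nat -> j <> m -> a j = b j) ->
  sum_n a n = sum_n b n + (a m - b m).
Proof.
  intros Hm Hab. rewrite <- (sum_n_delta (a m - b m) m n Hm), <- sum_n_Rplus.
  apply sum_n_ext_R. intros j Hj. destruct (Nat.eqb_spec j m) as [->|]; [ring|].
  rewrite Hab; auto; ring.
Qed.

Lemma sum_n_ge_term (a : nat -> R) m n : (m <= n)%nat ->
  (forall i, (i <= n)%nat -> 0 <= a i) -> a m <= sum_n a n.
Proof.
  intros Hm Ha. rewrite <- (sum_n_delta (a m) m n Hm) at 1. apply sum_n_le.
  intros i Hi. destruct (Nat.eqb_spec i m) as [->|]; [lra|auto].
Qed.

Lemma sum_n_convex_const (al : nat -> R) c n : sum_n al n = 1 ->
  sum_n (fun l => al l * c) n = c.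
Proof. intros Hs. rewrite sum_n_Rmult_r, Hs. apply Rmult_1_r. Qed.

Lemma sum_n_convex_Rmin_le (al v : nat -> R) c n :
  (forall l, (l <= n)%nat -> 0 <= al l) -> sum_n al n = 1 ->
  sum_n (fun l => al l * Rmin c (v l)) n <= Rmin c (sum_n (fun l => al l * v l) n).
Proof.
  intros Hal Hs. apply Rmin_glb.
  - rewrite <- (sum_n_convex_const al c n Hs) at 1. apply sum_n_le. intros l Hl.
    apply Rmult_le_compat_l; [auto|apply Rmin_l].
  - apply sum_n_le. intros l Hl. apply Rmult_le_compat_l; [auto|apply Rmin_r].
Qed.

Definition two_point (i j : nat) (lam : R) (l : nat) : R :=
  (if (l =? i)%nat then lam else 0) + (if (l =? j)%nat then 1 - lam else 0).

Lemma sum_n_two_point (f : nat -> R) i j lam n : (i <= n)%nat -> (j <= n)%nat ->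
  sum_n (fun l => two_point i j lam l * f l) n = lam * f i + (1 - lam) * f j.
Proof.
  intros Hi Hj. unfold two_point.
  rewrite (sum_n_ext_R _ (fun l => (if (l =? i)%nat then lam * f i else 0) +
                                      (if (l =? j)%nat then (1 - lam) * f j else 0))).
  - now rewrite sum_n_Rplus, !sum_n_delta.
  - intros l _. destruct (Nat.eqb_spec l i), (Nat.eqb_spec l j); subst; ring.
Qed.

Lemma convex_comb_exists a b mu : b <= mu <= a ->
  exists lam, 0 <= lam <= 1 /\ lam * b + (1 - lam) * a = mu.
Proof.
  intros Hmu. destruct (Req_dec a b) as [<-|Hab].
  - exists 1. split; [lra|]. lra.
  - exists ((a - mu) / (a - b)). assert (0 < a - b) by lra. split; [split|].
    + apply Rdiv_le_0_compat; lra.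
    + apply Rmult_le_reg_r with (a - b); [lra|]. field_simplify; lra.
    + field. lra.
Qed.

Lemma Rmin_convex_comb c a b lam : 0 <= lam <= 1 -> b <= a -> c <= b \/ a <= c ->
  lam * Rmin c b + (1 - lam) * Rmin c a = Rmin c (lam * b + (1 - lam) * a).
Proof.
  intros Hlam Hba [Hc|Hc].
  - rewrite !Rmin_left; nra.
  - rewrite !Rmin_right; nra.
Qed.

Lemma Rmax_0_sq_le c x : c <= x -> Rmax 0 c ^ 2 <= x ^ 2.
Proof. intros. unfold Rmax. destruct (Rle_dec 0 c); nra. Qed.

Lemma Rplus_Rmax_0_opp c : c + Rmax 0 (- c) = Rmax 0 c.
Proof. unfold Rmax. destruct (Rle_dec 0 (- c)), (Rle_dec 0 c); lra. Qed.

Lemma Rsqr_Rmax_shift_le s t v : (t + Rmax 0 (s - t + v)) ^ 2 <= (s + v) ^ 2 + t ^ 2.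
Proof.
  unfold Rmax. destruct (Rle_dec 0 (s - t + v)).
  - replace (t + (s - t + v)) with (s + v) by ring. pose proof (pow2_ge_0 t). lra.
  - replace (t + 0) with t by ring. pose proof (pow2_ge_0 (s + v)). lra.
Qed.

Lemma is_derive_0_of_sq_bound (f : R -> R) x C :
  (forall h, Rabs (f (x + h) - f x) <= C * h ^ 2) -> is_derive f x 0.
Proof.
  intros Hf. apply is_derive_Reals. intros eps Heps.
  assert (Hd : 0 < eps / (Rabs C + 1)) by (apply Rdiv_lt_0_compat; [|pose proof (Rabs_pos C)]; lra).
  exists (mkposreal _ Hd). intros h Hh Hlt; simpl in Hlt.
  assert (Hah : 0 < Rabs h) by now apply Rabs_pos_lt.
  assert (Hq : Rabs (f (x + h) - f x) <= (Rabs C + 1) * Rabs h * Rabs h).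
  { eapply Rle_trans; [apply Hf|]. rewrite <- pow2_abs.
    pose proof (Rle_abs C). pose proof (pow2_ge_0 (Rabs h)). nra. }
  assert (Hsmall : (Rabs C + 1) * Rabs h < eps).
  { apply Rmult_lt_reg_r with (/ (Rabs C + 1)); [apply Rinv_0_lt_compat; pose proof (Rabs_pos C); lra|].
    replace ((Rabs C + 1) * Rabs h * / (Rabs C + 1)) with (Rabs h) by (field; pose proof (Rabs_pos C); lra).
    exact Hlt. }
  replace ((f (x + h) - f x) / h - 0) with ((f (x + h) - f x) * / h) by (unfold Rdiv; ring).
  rewrite Rabs_mult, Rabs_inv. apply Rmult_lt_reg_r with (Rabs h); [lra|].
  rewrite Rmult_assoc, Rinv_l by lra. nra.
Qed.

Lemma Glb_Rbar_real_spec (E : R -> Prop) m : (exists x, E x) -> (forall x, E x -> m <= x) ->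
  (forall x, E x -> real (Glb_Rbar E) <= x) /\
  (forall b, (forall x, E x -> b <= x) -> b <= real (Glb_Rbar E)).
Proof.
  intros [x0 Hx0] Hm. destruct (Glb_Rbar_correct E) as [Hlb Hglb].
  destruct (Glb_Rbar E) as [r| |] eqn:Eg; simpl.
  - split; [exact Hlb|]. intros b Hb. apply (Hglb (Finite b)). exact Hb.
  - exfalso. exact (Hlb x0 Hx0).
  - exfalso. exact (Hglb (Finite m) Hm).
Qed.

Lemma Glb_Rbar_real_le_shift (S T : R -> Prop) c m : (exists x, S x) ->
  (forall x, S x -> m <= x) -> (forall x, T x -> m <= x) ->
  (forall x, S x -> exists y, T y /\ y <= x + c) ->
  real (Glb_Rbar T) <= real (Glb_Rbar S) + c.
Proof.
  intros [x0 Hx0] HS HT Hshift.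
  assert (HTne : exists y, T y) by (destruct (Hshift x0 Hx0) as [y [Hy _]]; eauto).
  destruct (Glb_Rbar_real_spec S m (ex_intro _ x0 Hx0) HS) as [_ Sglb].
  destruct (Glb_Rbar_real_spec T m HTne HT) as [Tlb _].
  enough (real (Glb_Rbar T) - c <= real (Glb_Rbar S)) by lra.
  apply Sglb. intros x Hx. destruct (Hshift x Hx) as [y [Hy Hyx]]. specialize (Tlb y Hy). lra.
Qed.

Definition step (z : nat -> R) (j : nat) : R := sqrt (z j - z (S j)).

(* The j-th coordinate of y + nu - sum_i alpha_i (x_i - g_i / L) for j <= N, see wz_closed_form. *)
Definition coord (N : nat) (z y nu al : nat -> R) (j : nat) : R :=
  y j + nu j + / step z j * sum_n (fun l => al l * (z j - Rmin (z j) (z (S l)))) (S N).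

Definition mean (N : nat) (z al : nat -> R) : R := sum_n (fun l => al l * z (S l)) (S N).

Definition feasible (N : nat) (nu al : nat -> R) : Prop :=
  (forall j, (j <= N)%nat -> 0 <= nu j) /\ (forall i, (i <= S N)%nat -> 0 <= al i) /\
  sum_n al (S N) = 1.

Definition supported_below (n : nat) (al : nat -> R) : Prop := forall l, (n <= l)%nat -> al l = 0.

Definition profile_coord (z y : nat -> R) (mu : R) (j : nat) : R :=
  y j + (z j - Rmin (z j) mu) / step z j.

Definition profile (N : nat) (z y : nat -> R) (mu : R) : R :=
  / 2 * sum_n (fun j => Rmax 0 (profile_coord z y mu j) ^ 2) N + mu.

Section Zeta.
Variables (N : nat) (L : R) (z : nat -> R).
Hypothesis L_pos : 0 < L.
Hypothesis z_decr : forall i, (i <= S N)%nat -> z (S i) < z i.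
Hypothesis z_last : z (S (S N)) = 0.

Lemma z_antitone a b : (a <= b)%nat -> (b <= S (S N))%nat -> z b <= z a.
Proof.
  induction 1 as [|b Hab IH]; intros Hb; [lra|].
  pose proof (z_decr b ltac:(lia)). pose proof (IH ltac:(lia)). lra.
Qed.

Lemma z_lt a b : (a < b)%nat -> (b <= S (S N))%nat -> z b < z a.
Proof.
  intros Hab Hb. destruct b as [|b]; [lia|].
  pose proof (z_decr b ltac:(lia)). pose proof (z_antitone a b ltac:(lia) ltac:(lia)). lra.
Qed.

Lemma z_nonneg i : (i <= S (S N))%nat -> 0 <= z i.
Proof. intros. rewrite <- z_last. apply z_antitone; lia. Qed.

Lemma step_pos j : (j <= S N)%nat -> 0 < step z j.
Proof. intros Hj. apply sqrt_lt_R0. pose proof (z_decr j Hj). lra. Qed.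

Lemma step_sq j : (j <= S N)%nat -> step z j ^ 2 = z j - z (S j).
Proof. intros Hj. unfold step. rewrite pow2_sqrt; [reflexivity|]. pose proof (z_decr j Hj). lra. Qed.

Lemma xv_sub_gv i j : (i <= S N)%nat -> (j <= N)%nat ->
  xv z i j - / L * gv N L z i j = - / step z j * (z j - Rmin (z j) (z (S i))).
Proof.
  intros Hi Hj. pose proof (step_pos j ltac:(lia)). unfold xv, gv. fold (step z j).
  destruct (Nat.ltb_spec j i), (Nat.eqb_spec j i) as [<-|]; simpl; try lia.
  - rewrite Bool.andb_false_r, Rmin_right by (apply z_antitone; lia). field. lra.
  - replace (j <=? N)%nat with true by (symmetry; apply Nat.leb_le; lia). simpl. fold (step z j).
    rewrite Rmin_right by (pose proof (z_decr j ltac:(lia)); lra).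
    rewrite <- step_sq by lia. field. split; lra.
  - rewrite Bool.andb_false_r, Rmin_left by (apply z_antitone; lia). field. lra.
Qed.

Lemma fv_sub_sqnorm_gv i : (i <= S N)%nat ->
  fv N L z i - / (2 * L) * sqnorm N (gv N L z i) = L * z (S i).
Proof.
  intros Hi. unfold fv, sqnorm, gv. destruct (Nat.leb_spec i N).
  - rewrite (sum_n_ext_R _ (fun j => if (j =? i)%nat then (L * step z i) ^ 2 else 0))
      by (intros j _; destruct (j =? i)%nat; simpl; unfold step; ring).
    rewrite sum_n_delta, Rpow_mult_distr, step_sq by lia. field. lra.
  - rewrite sum_n_zero by (intros; simpl; ring). replace i with (S N) by lia.
    rewrite z_last. field. lra.
Qed.

Lemma wz_closed_form y nu al :
  wz N L z y nu al = L / 2 * sum_n (fun j => coord N z y nu al j ^ 2) N + L * mean N z al.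
Proof.
  unfold wz, mean, sqnorm. f_equal.
  - f_equal. apply sum_n_ext_R. intros j Hj. unfold coord. f_equal.
    rewrite (sum_n_ext_R _ (fun i => al i * (z j - Rmin (z j) (z (S i))) * (- / step z j)))
      by (intros i Hi; rewrite xv_sub_gv by lia; ring).
    rewrite sum_n_Rmult_r. ring.
  - rewrite (sum_n_ext_R _ (fun i => al i * z (S i) * L))
      by (intros i Hi; rewrite fv_sub_sqnorm_gv by lia; ring).
    now rewrite sum_n_Rmult_r.
Qed.

Lemma coord_eq y nu al j : sum_n al (S N) = 1 ->
  coord N z y nu al j =
  y j + nu j + (z j - sum_n (fun l => al l * Rmin (z j) (z (S l))) (S N)) / step z j.
Proof.
  intros Hs. unfold coord, Rdiv. rewrite Rmult_comm. do 2 f_equal.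
  rewrite (sum_n_ext_R _ (fun l => al l * z j + - (al l * Rmin (z j) (z (S l)))))
    by (intros; ring).
  rewrite sum_n_Rplus, sum_n_convex_const by exact Hs.
  rewrite (sum_n_ext_R (fun l => - _) (fun l => al l * Rmin (z j) (z (S l)) * -1)) by (intros; ring).
  rewrite sum_n_Rmult_r. lra.
Qed.

Lemma profile_coord_le_coord y nu al j : feasible N nu al -> (j <= N)%nat ->
  profile_coord z y (mean N z al) j <= coord N z y nu al j.
Proof.
  intros [Hnu [Hal Hs]] Hj. rewrite coord_eq by exact Hs. unfold profile_coord, mean, Rdiv.
  pose proof (Rinv_0_lt_compat _ (step_pos j ltac:(lia))).
  pose proof (sum_n_convex_Rmin_le al (fun l => z (S l)) (z j) (S N) Hal Hs).
  pose proof (Hnu j Hj). nra.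
Qed.

Lemma wz_ge_profile y nu al : feasible N nu al -> L * profile N z y (mean N z al) <= wz N L z y nu al.
Proof.
  intros Hf. rewrite wz_closed_form. unfold profile.
  enough (sum_n (fun j => Rmax 0 (profile_coord z y (mean N z al) j) ^ 2) N <=
          sum_n (fun j => coord N z y nu al j ^ 2) N) by nra.
  apply sum_n_le. intros j Hj. apply Rmax_0_sq_le. now apply profile_coord_le_coord.
Qed.

Lemma profile_coord_antitone y mu mu' j : (j <= S N)%nat -> mu <= mu' ->
  profile_coord z y mu' j <= profile_coord z y mu j.
Proof.
  intros Hj Hmu. unfold profile_coord, Rdiv.
  pose proof (Rinv_0_lt_compat _ (step_pos j Hj)).
  assert (Rmin (z j) mu <= Rmin (z j) mu') by (unfold Rmin; destruct Rle_dec, Rle_dec; lra).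
  nra.
Qed.

(* Lowering mu below z n saves z n - mu in the linear term, but the k-th coordinate, which is at
   least step z k because y k >= 0, grows by (z n - mu) / step z k: its square pays for the saving. *)
Lemma profile_le_below y k n mu : (k < n)%nat -> (n <= N)%nat -> 0 <= y k -> mu <= z n ->
  profile N z y (z n) <= profile N z y mu.
Proof.
  intros Hkn HnN Hyk Hmu. unfold profile.
  set (T := fun m j => Rmax 0 (profile_coord z y m j) ^ 2).
  assert (Hle : forall j, (j <= N)%nat -> 0 <= T mu j - T (z n) j).
  { intros j Hj. unfold T.
    pose proof (profile_coord_antitone y mu (z n) j ltac:(lia) Hmu).
    assert (Rmax 0 (profile_coord z y (z n) j) <= Rmax 0 (profile_coord z y mu j))
      by (unfold Rmax; destruct Rle_dec, Rle_dec; lra).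
    pose proof (Rmax_l 0 (profile_coord z y (z n) j)). nra. }
  assert (Hgain : 2 * (z n - mu) <= T mu k - T (z n) k).
  { unfold T, profile_coord.
    pose proof (step_pos k ltac:(lia)). pose proof (step_sq k ltac:(lia)).
    pose proof (z_lt k n ltac:(lia) ltac:(lia)). pose proof (z_antitone (S k) n ltac:(lia) ltac:(lia)).
    rewrite (Rmin_right (z k) mu), (Rmin_right (z k) (z n)) by lra.
    set (s := step z k) in *.
    set (c := y k + (z k - z n) / s). set (a := (z n - mu) / s).
    assert (Hc : s <= c).
    { unfold c. enough (s <= (z k - z n) / s) by lra.
      apply Rmult_le_reg_r with s; [lra|]. unfold Rdiv. rewrite Rmult_assoc, Rinv_l by lra. nra. }
    assert (Ha : a * s = z n - mu) by (unfold a; field; lra).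
    assert (0 <= a) by (unfold a; apply Rdiv_le_0_compat; lra).
    replace (y k + (z k - mu) / s) with (c + a) by (unfold c, a; field; lra).
    rewrite !Rmax_right by lra. nra. }
  pose proof (sum_n_ge_term (fun j => T mu j - T (z n) j) k N ltac:(lia) Hle).
  rewrite (sum_n_ext_R (T mu) (fun j => T (z n) j + (T mu j - T (z n) j))) by (intros; ring).
  rewrite sum_n_Rplus. simpl in *. unfold T in *. lra.
Qed.

Lemma mean_le_z1 nu al : feasible N nu al -> mean N z al <= z 1%nat.
Proof.
  intros [_ [Hal Hs]]. unfold mean. rewrite <- (sum_n_convex_const al (z 1%nat) (S N) Hs).
  apply sum_n_le. intros l Hl. apply Rmult_le_compat_l; [auto|]. apply z_antitone; lia.
Qed.

Lemma z_bracket n mu : (1 <= n)%nat -> (n <= S N)%nat -> z n <= mu <= z 1%nat ->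
  exists i, (i < n)%nat /\ z (S i) <= mu <= z (S (pred i)).
Proof.
  induction 1 as [|n Hn IH]; intros HnN Hmu.
  - exists 0%nat. split; [lia|exact Hmu].
  - destruct (Rle_dec mu (z n)).
    + exists n. split; [lia|]. replace (S (pred n)) with n by lia. lra.
    + destruct IH as [i [Hi Hbr]]; [lia|lra|]. exists i. split; [lia|exact Hbr].
Qed.

(* A mean mu in [z (S i), z i] is realised by weights on the consecutive indices i and i - 1;
   for i = 0 both indices coincide and then mu = z 1. *)
Lemma profile_attained y n mu : (1 <= n)%nat -> (n <= N)%nat -> z n <= mu <= z 1%nat ->
  exists nu al, feasible N nu al /\ supported_below n al /\
    wz N L z y nu al = L * profile N z y mu.
Proof.
  intros Hn1 HnN Hmu.
  destruct (z_bracket n mu Hn1 ltac:(lia) Hmu) as [i [Hin Hbr]].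
  destruct (convex_comb_exists _ _ _ Hbr) as [lam [Hlam Hmean]].
  set (al := two_point i (pred i) lam).
  assert (Hal_sum : forall f : nat -> R, sum_n (fun l => al l * f l) (S N) =
                                         lam * f i + (1 - lam) * f (pred i))
    by (intros; apply sum_n_two_point; lia).
  assert (Hs : sum_n al (S N) = 1).
  { rewrite (sum_n_ext_R _ (fun l => al l * 1)) by (intros; ring). rewrite Hal_sum. lra. }
  exists (fun j => Rmax 0 (- profile_coord z y mu j)), al. split; [|split].
  - split; [|split; [|exact Hs]].
    + intros; apply Rmax_l.
    + intros l _. unfold al, two_point. destruct (l =? i)%nat, (l =? pred i)%nat; lra.
  - intros l Hl. unfold al, two_point.
    destruct (Nat.eqb_spec l i), (Nat.eqb_spec l (pred i)); lia || lra.
  - rewrite wz_closed_form. unfold profile, mean. rewrite Hal_sum, Hmean.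
    rewrite (sum_n_ext_R _ (fun j => Rmax 0 (profile_coord z y mu j) ^ 2)); [field; lra|].
    intros j Hj. rewrite coord_eq, Hal_sum by exact Hs.
    rewrite Rmin_convex_comb, Hmean; [|exact Hlam|apply z_antitone; lia|].
    + rewrite <- (Rplus_Rmax_0_opp (profile_coord z y mu j)). unfold profile_coord. f_equal. ring.
    + destruct (Nat.le_gt_cases j i).
      * right. apply z_antitone; lia.
      * left. apply z_antitone; lia.
Qed.

Lemma wz_reduce y k n nu al : (k < n)%nat -> (n <= N)%nat -> 0 <= y k -> feasible N nu al ->
  exists nu' al', feasible N nu' al' /\ supported_below n al' /\
    wz N L z y nu' al' <= wz N L z y nu al.
Proof.
  intros Hkn HnN Hyk Hf.
  pose proof (mean_le_z1 nu al Hf). pose proof (z_antitone 1 n ltac:(lia) ltac:(lia)).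
  set (mu := mean N z al) in *.
  destruct (profile_attained y n (Rmax mu (z n)) ltac:(lia) HnN)
    as [nu' [al' [Hf' [Hsupp Hw]]]].
  { split; [apply Rmax_r|]. apply Rmax_lub; lra. }
  exists nu', al'. split; [exact Hf'|split; [exact Hsupp|]].
  rewrite Hw. apply Rle_trans with (L * profile N z y mu); [|now apply wz_ge_profile].
  apply Rmult_le_compat_l; [lra|].
  unfold Rmax. destruct (Rle_dec mu (z n)); [|lra].
  now apply (profile_le_below y k n mu).
Qed.

Lemma coord_supported_below y nu al j : (j <= N)%nat -> supported_below j al ->
  coord N z y nu al j = y j + nu j.
Proof.
  intros Hj Hsupp. unfold coord. rewrite sum_n_zero; [ring|].
  intros l Hl. destruct (Nat.le_gt_cases j l) as [Hjl|Hlj].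
  - rewrite Hsupp by exact Hjl. ring.
  - rewrite Rmin_left by (apply z_antitone; lia). ring.
Qed.

Lemma wz_change_coord n y y' nu nu' al : (n <= N)%nat -> supported_below n al ->
  (forall j, j <> n -> y' j = y j /\ nu' j = nu j) ->
  wz N L z y' nu' al = wz N L z y nu al + L / 2 * ((y' n + nu' n) ^ 2 - (y n + nu n) ^ 2).
Proof.
  intros HnN Hsupp Hsame. rewrite !wz_closed_form.
  rewrite (sum_n_update (fun j => coord N z y' nu' al j ^ 2) (fun j => coord N z y nu al j ^ 2) n N HnN).
  - rewrite !coord_supported_below by assumption. ring.
  - intros j _ Hj. unfold coord. destruct (Hsame j Hj) as [-> ->]. reflexivity.
Qed.

Lemma wz_nonneg y nu al : feasible N nu al -> 0 <= wz N L z y nu al.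
Proof.
  intros [_ [Hal _]]. rewrite wz_closed_form.
  assert (0 <= sum_n (fun j => coord N z y nu al j ^ 2) N)
    by (apply sum_n_nonneg; intros; apply pow2_ge_0).
  assert (0 <= mean N z al).
  { apply sum_n_nonneg. intros l Hl. apply Rmult_le_pos; [auto|]. apply z_nonneg. lia. }
  nra.
Qed.
End Zeta.

Section ShiftedObjective.
Variables (N : nat) (L : R) (z ybar : nat -> R) (k n : nat).
Hypothesis L_pos : 0 < L.
Hypothesis z_decr : forall i, (i <= S N)%nat -> z (S i) < z i.
Hypothesis z_last : z (S (S N)) = 0.
Hypothesis k_lt_n : (k < n)%nat.
Hypothesis n_le_N : (n <= N)%nat.
Hypothesis ybar_k_nonneg : 0 <= ybar k.
Hypothesis ybar_n_zero : ybar n = 0.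

Lemma Wvals_nonneg y x : Wvals N L z y x -> 0 <= x.
Proof. intros [nu [al [Hnu [Hal [Hs ->]]]]]. now apply wz_nonneg. Qed.

Lemma Wvals_nonempty y : exists x, Wvals N L z y x.
Proof.
  exists (wz N L z y (fun _ => 0) (fun i => if (i =? 0)%nat then 1 else 0)).
  exists (fun _ => 0), (fun i => if (i =? 0)%nat then 1 else 0).
  split; [intros; lra|split; [|split; [|reflexivity]]].
  - intros i _. destruct (i =? 0)%nat; lra.
  - apply sum_n_delta. lia.
Qed.

(* After wz_reduce, nu n absorbs an increase of the n-th coordinate, and a decrease from
   s + nu1 n to t costs at most t ^ 2. *)
Lemma Wvals_shift s t x : Wvals N L z (shift ybar n s) x ->
  exists x', Wvals N L z (shift ybar n t) x' /\ x' <= x + L / 2 * t ^ 2.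
Proof.
  intros [nu [al [Hnu [Hal [Hs ->]]]]].
  assert (Hyk : 0 <= shift ybar n s k).
  { unfold shift. destruct (Nat.eqb_spec k n); [lia|exact ybar_k_nonneg]. }
  destruct (wz_reduce N L z L_pos z_decr z_last _ k n nu al k_lt_n n_le_N Hyk
              (conj Hnu (conj Hal Hs))) as [nu1 [al1 [[Hnu1 [Hal1 Hs1]] [Hsupp Hle]]]].
  set (nu2 := fun j => if (j =? n)%nat then Rmax 0 (s - t + nu1 n) else nu1 j).
  exists (wz N L z (shift ybar n t) nu2 al1). split.
  - exists nu2, al1. split; [|split; [exact Hal1|split; [exact Hs1|reflexivity]]].
    intros j Hj. unfold nu2. destruct (j =? n)%nat; [apply Rmax_l|auto].
  - rewrite (wz_change_coord N L z L_pos z_decr z_last n (shift ybar n s) _ nu1 _ al1 n_le_N Hsupp).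
    + assert (Hsh : forall u, shift ybar n u n = u)
        by (intros; unfold shift; rewrite Nat.eqb_refl, ybar_n_zero; ring).
      replace (nu2 n) with (Rmax 0 (s - t + nu1 n)) by (unfold nu2; now rewrite Nat.eqb_refl).
      rewrite !Hsh. pose proof (Rsqr_Rmax_shift_le s t (nu1 n)). nra.
    + intros j Hj. unfold shift, nu2. now destruct (Nat.eqb_spec j n).
Qed.

Lemma Wz_shift_sq_bound t :
  Rabs (Wz N L z (shift ybar n t) - Wz N L z (shift ybar n 0)) <= L / 2 * t ^ 2.
Proof.
  unfold Wz.
  pose proof (Glb_Rbar_real_le_shift _ _ _ 0 (Wvals_nonempty _)
                (Wvals_nonneg _) (Wvals_nonneg _) (Wvals_shift t 0)) as Hdown.
  pose proof (Glb_Rbar_real_le_shift _ _ _ 0 (Wvals_nonempty _)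
                (Wvals_nonneg _) (Wvals_nonneg _) (Wvals_shift 0 t)) as Hup.
  assert (0 <= L / 2 * t ^ 2) by (apply Rmult_le_pos; [lra|apply pow2_ge_0]).
  replace (L / 2 * 0 ^ 2) with 0 in Hdown by ring.
  apply Rabs_le. lra.
Qed.
End ShiftedObjective.

Theorem corollary3 (N : nat) (L : R) (zeta : nat -> R) (ybar : nat -> R) (k n : nat) :
  (0 < N)%nat -> 0 < L ->
  (forall i, (i <= S N)%nat -> zeta (S i) < zeta i) ->
  zeta (S (S N)) = 0 ->
  (k < n)%nat -> (n <= N)%nat ->
  0 <= ybar k -> ybar n = 0 ->
  is_derive (fun t => Wz N L zeta (shift ybar n t)) 0 0.
Proof.
  intros _ HL Hz Hz0 Hkn HnN Hyk Hyn.
  apply (is_derive_0_of_sq_bound _ 0 (L / 2)). intros h. rewrite Rplus_0_l.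
  exact (Wz_shift_sq_bound N L zeta ybar k n HL Hz Hz0 Hkn HnN Hyk Hyn h).
Qed.
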